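(* Consider ASAGA with step size $\gamma>0$ (described in the context). For all $t\ge0$, $$a_{t+1}\le\Big(1-\frac{\gamma\mu}{2}\Big)a_t+\gamma^2C_1\,\mathbb{E}\|g_t\|^2+\gamma^2C_2\sum_{u=(t-\tau)_+}^{t-1}\mathbb{E}\|g_u\|^2-2\gamma e_t,$$ where $C_1:=1+\sqrt\Delta\,\tau$, $C_2:=\sqrt\Delta+\gamma\mu C_1$, $a_t:=\mathbb{E}\|x_t-x^*\|^2$ and $e_t:=\mathbb{E}f(\hat x_t)-f(x^* )$.
   Context: Problem: $f(x)=\frac1n\sum_{i=1}^n f_i(x)$ on $\mathbb{R}^d$, each $f_i$ convex, differentiable with $L$-Lipschitz gradient $f_i'$; $f$ is $\mu$-strongly convex with minimizer $x^*$. $S_i$ is the support of $f_i'$. $p_v:=|\{i:v\in S_i\}|/n$; $D$ diagonal with entries $1/p_v$ (for $p_v>0$); $D_i:=P_{S_i}D$ with $P_{S_i}$ the coordinate projection onto $S_i$. $\Delta:=\frac1n\max_v|\{i:v\in S_i\}|$. ASAGA: shared memory holds $x$ (initially $x_0$) and $\alpha_1,\dots,\alpha_n$ (initially arbitrary fixed $\alpha_i^0$). Cores concurrently and without locks repeat: (1) read $x$ and all $\alpha_j$ into local copies $\hat x,\hat\alpha_j$, possibly inconsistently, in a manner not depending on the next sample; (2) sample $i$ uniformly from $\{1,\dots,n\}$ independently; (3) compute $\delta=-\gamma(f_i'(\hat x)-\hat\alpha_i+D_i\frac1n\sum_k\hat\alpha_k)$; (4) for each $v\in S_i$ atomically add $[\delta]_v$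 to $[x]_v$ and set $[\alpha_i]_v\leftarrow[f_i'(\hat x)]_v$. Iterations are labeled $t=0,1,\dots$ in order of completion of their read step; $\hat x_t,\hat\alpha^t,i_t$ are the reads and sample of iteration $t$; $g_t:=f'_{i_t}(\hat x_t)-\hat\alpha^t_{i_t}+D_{i_t}(\frac1n\sum_k\hat\alpha^t_k)$. Then $[\hat x_t]_v=[x_0]_v-\gamma\sum[g_u]_v$ over those $u<t$ whose write to coordinate $v$ was completed before iteration $t$ read it, and $i_r$ is independent of $\hat x_t$ for $r\ge t$. Bounded overlap: every write of iteration $t$ is completed before iteration $t+\tau+1$ starts reading. The virtual iterate is defined by $x_{t+1}:=x_t-\gamma g_t$ (starting at $x_0$). $(s)_+:=\max(s,0)$; $\mathbb{E}$ is expectation over all randomness. *)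

From HB Require Import structures.
From mathcomp Require Import all_boot all_order all_algebra.
From mathcomp Require Import all_classical all_reals all_analysis.
Set Implicit Arguments. Unset Strict Implicit. Unset Printing Implicit Defensive.
Import Order.TTheory GRing.Theory Num.Theory.
Import numFieldNormedType.Exports.
Local Open Scope ring_scope.

Section ASAGA.
Variables (R : realType) (d n : nat).
Local Notation vec := 'rV[R]_d.

Definition sqnorm (x : vec) : R := \sum_(v < d) x 0 v ^+ 2.
Definition enorm (x : vec) : R := Num.sqrt (sqnorm x).
Definition dotv (x y : vec) : R := \sum_(v < d) x 0 v * y 0 v.

Definition convex_fun (F : vec -> R) : Prop :=
  forall (x y : vec) (l : R), 0 <= l <= 1 ->
    F (l *: x + (1 - l) *: y) <= l * F x + (1 - l) * F y.

Definition strongly_convex (mu : R) (F : vec -> R) : Prop :=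
  forall (x y : vec) (l : R), 0 <= l <= 1 ->
    F (l *: x + (1 - l) *: y) <=
      l * F x + (1 - l) * F y - mu / 2 * l * (1 - l) * sqnorm (x - y).

Definition is_gradient (F : vec -> R) (Fp : vec -> vec) : Prop :=
  forall x : vec, differentiable F x /\ forall h : vec, 'd F x h = dotv (Fp x) h.

Definition lipschitz_grad (L : R) (Fp : vec -> vec) : Prop :=
  forall x y : vec, enorm (Fp x - Fp y) <= L * enorm (x - y).

Definition supp (fp : 'I_n -> vec -> vec) (i : 'I_n) : {set 'I_d} :=
  [set v | `[< exists x : vec, fp i x 0 v != 0 >]].

Definition cnt fp (v : 'I_d) : nat := #|[set i | v \in supp fp i]|.
Definition pv fp (v : 'I_d) : R := (cnt fp v)%:R / n%:R.

(* D_i a = P_{S_i} D a, D = diag(1/p_v) (for p_v > 0) *)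
Definition Dproj fp (i : 'I_n) (a : vec) : vec :=
  \row_v (if (v \in supp fp i) && (0 < cnt fp v)%N then a 0 v / pv fp v else 0).

Definition Delta fp : R := (\max_(v < d) cnt fp v)%:R / n%:R.

(* A sample spath is the sequence (i_0, i_1, ...) of sampled indices. *)
Definition spath := nat -> 'I_n.

Definition ext (Hn : (0 < n)%N) (N : nat) (s : {ffun 'I_N -> 'I_n}) : spath :=
  fun k => match insub k with Some k' => s k' | None => Ordinal Hn end.

(* Expectation, over i.i.d. uniform i_0..i_{N-1}, of a quantity that
   depends only on the first N samples. *)
Definition Exp (Hn : (0 < n)%N) (N : nat) (X : spath -> R) : R :=
  (\sum_(s : {ffun 'I_N -> 'I_n}) X (ext Hn s)) / (n%:R ^+ N).

Definition prefix_eq (t : nat) (w w' : spath) : Prop :=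
  forall u, (u < t)%N -> w u = w' u.

(* ---------- the ASAGA process ----------
   xhat t w  : the (possibly inconsistent) read of x by iteration t
   W t v w u : the write of iteration u to coordinate v of x was completed
               before iteration t read coordinate v
   src t j v w : which write to [alpha_j]_v the read of iteration t sees
               (None = the initial value alpha0) *)
Variables (fp : 'I_n -> vec -> vec) (gamma : R) (x0 : vec) (alpha0 : 'I_n -> vec)
  (xhat : nat -> spath -> vec) (W : nat -> 'I_d -> spath -> nat -> bool)
  (src : nat -> 'I_n -> 'I_d -> spath -> option nat).

Definition alphahat (t : nat) (j : 'I_n) (w : spath) : vec :=
  \row_v match src t j v w with
         | None => alpha0 j 0 v
         | Some u => fp j (xhat u w) 0 v
         end.

Definition gt (t : nat) (w : spath) : vec :=
  fp (w t) (xhat t w) - alphahat t (w t) w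
  + Dproj fp (w t) (n%:R^-1 *: \sum_(k < n) alphahat t k w).

Definition xvirt (t : nat) (w : spath) : vec :=
  x0 - gamma *: \sum_(u < t) gt u w.

Definition asaga_process (tau : nat) : Prop :=
      (forall t v w, xhat t w 0 v =
          x0 0 v - gamma * \sum_(u < t | W t v w u) gt u w 0 v) /\
      (forall t v w u, W t v w u -> (u < t)%N /\ v \in supp fp (w u)) /\
      (* bounded overlap: writes of iteration u are done before u+tau+1 reads *)
      (forall t v w u, (u + tau < t)%N -> v \in supp fp (w u) -> W t v w u) /\
      (forall t j v w u, src t j v w = Some u ->
          [/\ (u < t)%N, w u = j & v \in supp fp j]) /\
      (forall t j v w u, (u + tau < t)%N -> w u = j -> v \in supp fp j ->
          src t j v w != None) /\
      (* the reads of iteration t do not depend on i_t, i_{t+1}, ... *)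
      (forall t w w', prefix_eq t w w' ->
          (forall v, W t v w =1 W t v w') /\ (forall j v, src t j v w = src t j v w')).

End ASAGA.

From mathcomp Require Import all_boot all_order all_algebra perm.
From mathcomp Require Import all_classical all_reals all_analysis.
From mathcomp Require Import ring lra.
Import Order.TTheory GRing.Theory Num.Theory.
Import numFieldNormedType.Exports.
Set Implicit Arguments. Unset Strict Implicit. Unset Printing Implicit Defensive.
Local Open Scope ring_scope.

(* Expanding x_{t+1} = x_t - gamma g_t reduces the step to the serial SAGA
   computation, except that g_t is evaluated at the inconsistent read xhat_t.
   By bounded overlap, x_t = xhat_t - gamma c_t where c_t collects the at most
   tau updates g_u, t - tau <= u < t, whose writes the read of iteration t
   missed.  Strong convexity at xhat_t together with unbiasedness,
   E[g_t | i_0 .. i_{t-1}] = grad F(xhat_t), gives the contraction and the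
   -2 gamma e_t term; what remains is E|c_t|^2 and E<c_t, g_t>.  Each product
   g_u g_k (u < k) is split coordinatewise by AM-GM with weight sqrt Delta:
   g_k vanishes off S_{i_k}, and i_k is independent of g_u, so the surviving
   coordinates of g_u carry expected weight at most Delta. *)

Definition ffun_upd (N n : nat) (s : {ffun 'I_N -> 'I_n}) (k : 'I_N) (i : 'I_n) :
  {ffun 'I_N -> 'I_n} := [ffun m => if m == k then i else s m].

Section Expectation.
Variables (R : realType) (n : nat).

Lemma sum_ffun_upd N (h : {ffun 'I_N -> 'I_n} -> R) (k : 'I_N) :
  \sum_s \sum_(i < n) h (ffun_upd s k i) = n%:R * \sum_s h s.
Proof.
pose fiber i := \sum_(s : {ffun 'I_N -> 'I_n} | s k == i) h s.
have upd_fiber i j :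
    \sum_(s : {ffun 'I_N -> 'I_n} | s k == j) h (ffun_upd s k i) = fiber i.
  pose sw s := ffun_upd s k (tperm i j (s k)).
  have swK : involutive sw.
    move=> s; apply/ffunP => m; rewrite /sw /ffun_upd !ffunE eqxx.
    by case: eqP => [->|//]; rewrite tpermK.
  rewrite /fiber [RHS](reindex_inj (inv_inj swK)) /=.
  apply: eq_big => [s|s /eqP sk].
    rewrite /sw /ffun_upd ffunE eqxx.
    by rewrite -[X in tperm _ _ _ == X](tpermR i j) (can_eq (tpermK i j)).
  congr h; apply/ffunP => m; rewrite /sw /ffun_upd !ffunE.
  by rewrite sk tpermR.
rewrite exchange_big /= (partition_big (fun s : {ffun 'I_N -> 'I_n} => s k) predT) //=.
transitivity (\sum_(i < n) n%:R * fiber i).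
  apply: eq_bigr => i _; rewrite (partition_big (fun s : {ffun 'I_N -> 'I_n} => s k) predT) //=.
  by under eq_bigr do rewrite upd_fiber; rewrite sumr_const card_ord mulr_natl.
by rewrite -mulr_sumr.
Qed.

Variables (Hn : (0 < n)%N) (N : nat).
Implicit Types X Y : spath n -> R.
Local Notation E := (@Exp R n Hn N).

Lemma le_Exp X Y : (forall w, X w <= Y w) -> E X <= E Y.
Proof.
move=> XY; rewrite /Exp ler_pM2r ?invr_gt0 ?exprn_gt0 ?ltr0n //.
by apply: ler_sum => s _.
Qed.

Lemma eq_Exp X Y : X =1 Y -> E X = E Y.
Proof. by move=> XY; rewrite /Exp; under eq_bigr do rewrite XY. Qed.

Lemma ExpD X Y : E (fun w => X w + Y w) = E X + E Y.
Proof. by rewrite /Exp big_split /= mulrDl. Qed.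

Lemma ExpB X Y : E (fun w => X w - Y w) = E X - E Y.
Proof. by rewrite /Exp sumrB mulrBl. Qed.

Lemma ExpZ (c : R) X : E (fun w => c * X w) = c * E X.
Proof. by rewrite /Exp -mulr_sumr mulrA. Qed.

Lemma Exp_cst (c : R) : E (fun=> c) = c.
Proof.
rewrite /Exp sumr_const card_ffun !card_ord -[c *+ _]mulr_natr natrX mulfK //.
by rewrite expf_neq0 // pnatr_eq0 -lt0n.
Qed.

Lemma Exp_ge0 X : (forall w, 0 <= X w) -> 0 <= E X.
Proof. by move=> X0; rewrite -(Exp_cst 0); apply: le_Exp. Qed.

Lemma Exp_sum (I : Type) (r : seq I) (P : pred I) (X : I -> spath n -> R) :
  E (fun w => \sum_(i <- r | P i) X i w) = \sum_(i <- r | P i) E (X i).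
Proof. by rewrite /Exp exchange_big /= mulr_suml. Qed.

Lemma Exp_fresh_sample k (Z : spath n -> 'I_n -> R) : (k < N)%N ->
  (forall w w', prefix_eq k w w' -> Z w =1 Z w') ->
  E (fun w => Z w (w k)) = E (fun w => n%:R^-1 * \sum_(i < n) Z w i).
Proof.
move=> kN Zk; rewrite /Exp; congr (_ / _).
pose k' := Ordinal kN.
have ext_k s : ext Hn s k = s k'.
  rewrite /ext; case: insubP => [u _ uk|]; last by rewrite kN.
  by congr (s _); apply: val_inj.
have ext_upd s i : prefix_eq k (ext Hn (ffun_upd s k' i)) (ext Hn s).
  move=> u uk; rewrite /ext; case: insubP => // u' _ u'u.
  by rewrite /ffun_upd ffunE; case: eqP => // u'k; move: uk; rewrite -u'u u'k ltnn.
have n0 : n%:R != 0 :> R by rewrite pnatr_eq0 -lt0n.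
under eq_bigr do rewrite ext_k.
rewrite -[LHS](mulKf n0) -(sum_ffun_upd (fun s => Z (ext Hn s) (s k')) k') mulr_sumr.
apply: eq_bigr => s _; congr (_ * _); apply: eq_bigr => i _.
by rewrite {2}/ffun_upd ffunE eqxx; apply: Zk; exact: ext_upd.
Qed.

End Expectation.

Section Vectors.
Variables (R : realType) (d : nat).
Implicit Types x y : 'rV[R]_d.

Lemma sqnorm_ge0 x : 0 <= sqnorm x.
Proof. by apply: sumr_ge0 => v _; rewrite sqr_ge0. Qed.

Lemma sqnormN x : sqnorm (- x) = sqnorm x.
Proof. by apply: eq_bigr => v _; rewrite mxE sqrrN. Qed.

Lemma dotvC x y : dotv x y = dotv y x.
Proof. by apply: eq_bigr => v _; rewrite mulrC. Qed.

Lemma dotvZl (k : R) x y : dotv (k *: x) y = k * dotv x y.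
Proof. by rewrite /dotv mulr_sumr; apply: eq_bigr => v _; rewrite mxE mulrA. Qed.

Lemma dotvNl x y : dotv (- x) y = - dotv x y.
Proof. by rewrite -scaleN1r dotvZl mulN1r. Qed.

Lemma dotv_suml n (a : 'I_n -> 'rV[R]_d) y :
  dotv (\sum_(i < n) a i) y = \sum_(i < n) dotv (a i) y.
Proof.
rewrite /dotv exchange_big /=; apply: eq_bigr => v _.
by rewrite summxE mulr_suml.
Qed.

End Vectors.

Section FirstOrder.
Variables (R : realType) (d : nat).
Local Open Scope classical_set_scope.

Lemma strongly_convex_first_order (mu : R) (G : 'rV[R]_d -> R) (gx x y : 'rV[R]_d) :
  strongly_convex mu G -> is_derive x (y - x) G (dotv gx (y - x)) ->
  G x - G y + mu / 2 * sqnorm (x - y) <= dotv (x - y) gx.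
Proof.
move=> Gsc [Gder GD]; set h := y - x in Gder GD *; set S := sqnorm h.
have quot : (l^-1 *: (G (l *: h + x) - G x) - mu / 2 * S * l) @[l --> (0:R)^'+]
    --> dotv gx h - mu / 2 * S * 0.
  apply: cvgB; last by apply: cvgM; [exact: cvg_cst | exact: cvg_at_right_filter cvg_id].
  by rewrite -GD; exact: cvg_dnbhs_at_right Gder.
rewrite mulr0 subr0 in quot.
have D_le : dotv gx h <= G y - G x - mu / 2 * S.
  apply: (cvgr_to_le quot); near=> l.
  have l0 : 0 < l by near: l; exact: nbhs_right_gt.
  have l1 : l <= 1 by near: l; exact: nbhs_right_le.
  have -> : l *: h + x = l *: y + (1 - l) *: x.
    by apply/matrixP => i j; rewrite !mxE; ring.
  have /(_ _)/wrap[] := Gsc y x l; first by rewrite l1 ltW.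
  rewrite -/h -/S => conv.
  set Q := G (l *: y + (1 - l) *: x) in conv *.
  have : l^-1 * (Q - G x) <= l^-1 * (l * (G y - G x - mu / 2 * (1 - l) * S)).
    by apply: ler_wpM2l; [rewrite invr_ge0 ltW | lra].
  rewrite mulKf ?gt_eqF // -[l^-1 * _]/(l^-1 *: (Q - G x)); lra.
have -> : x - y = - h by rewrite opprB.
rewrite sqnormN dotvNl dotvC -/S; lra.
Unshelve. all: by end_near.
Qed.

Lemma is_derive_avg n (f : 'I_n -> 'rV[R]_d -> R) (fp : 'I_n -> 'rV[R]_d -> 'rV[R]_d)
    (x h : 'rV[R]_d) :
  (forall i, is_gradient (f i) (fp i)) ->
  is_derive x h (fun z => n%:R^-1 * \sum_(i < n) f i z)
    (dotv (n%:R^-1 *: \sum_(i < n) fp i x) h).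
Proof.
move=> fgrad; have -> : (fun z => n%:R^-1 * \sum_(i < n) f i z) = n%:R^-1 \*: \sum_(i < n) f i.
  by apply/funext => z; rewrite /= fct_sumE.
rewrite dotvZl dotv_suml; apply: is_deriveZ; apply: is_derive_sum => i.
have [fdiff fd] := fgrad i x.
by rewrite -fd -deriveE //; apply: derivableP; exact: diff_derivable.
Qed.

End FirstOrder.

Lemma amgm_weighted (R : realType) (s c a b : R) : 0 < s -> 0 <= c <= 1 ->
  2 * c * a * b <= s * b ^+ 2 + s^-1 * a ^+ 2.
Proof.
move=> s0 /andP[c0 c1]; set z := s^-1.
have z0 : 0 < z by rewrite invr_gt0.
have sz : s * z = 1 by rewrite mulfV ?gt_eqF.
have : 0 <= z * (s * b - c * a) ^+ 2 by rewrite mulr_ge0 ?sqr_ge0 ?ltW.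
have -> : z * (s * b - c * a) ^+ 2
    = s * b ^+ 2 * (s * z) - 2 * c * a * b * (s * z) + z * (c * a) ^+ 2 by ring.
rewrite sz !mulr1.
have : z * (c * a) ^+ 2 <= z * a ^+ 2.
  apply: ler_wpM2l; first exact: ltW.
  by rewrite exprMn ler_piMl ?sqr_ge0 // expr2 mulr_ile1.
lra.
Qed.

Section Sparsity.
Variables (R : realType) (d n : nat) (fp : 'I_n -> 'rV[R]_d -> 'rV[R]_d).

Lemma fp_notin_supp i x v : v \notin supp fp i -> fp i x 0 v = 0.
Proof.
rewrite inE => vS; apply/eqP; apply: contraNT vS => fv.
by apply/asboolP; exists x.
Qed.

Lemma Dproj_notin_supp i a v : v \notin supp fp i -> Dproj fp i a 0 v = 0.
Proof. by move=> vS; rewrite mxE (negbTE vS). Qed.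

Lemma sum_in_supp v (c : R) :
  \sum_(i < n) (if v \in supp fp i then c else 0) = (cnt fp v)%:R * c.
Proof. by rewrite -big_mkcond /= sumr_const /cnt cardsE mulr_natl. Qed.

Lemma cnt_gt0 i v : v \in supp fp i -> (0 < cnt fp v)%N.
Proof. by move=> vS; rewrite card_gt0; apply/set0Pn; exists i; rewrite inE. Qed.

Lemma Delta_ge0 : 0 <= Delta fp.
Proof. by rewrite divr_ge0 ?ler0n. Qed.

Lemma avg_supp_sqnorm_le (y : 'rV[R]_d) :
  n%:R^-1 * \sum_(i < n) \sum_(v < d) (if v \in supp fp i then y 0 v ^+ 2 else 0)
    <= Delta fp * sqnorm y.
Proof.
rewrite exchange_big /sqnorm !mulr_sumr; apply: ler_sum => v _.
rewrite sum_in_supp mulrA ler_wpM2r ?sqr_ge0 // mulrC ler_wpM2r ?invr_ge0 ?ler0n //.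
by rewrite ler_nat; apply: (@leq_bigmax _ (cnt fp) v).
Qed.

Hypothesis n_gt0 : (0 < n)%N.

Lemma Delta_gt0 i v : v \in supp fp i -> 0 < Delta fp.
Proof.
move=> vS; rewrite divr_gt0 ?ltr0n //.
exact: leq_trans (cnt_gt0 vS) (@leq_bigmax _ (cnt fp) v).
Qed.

Lemma sum_Dproj_avg (a : 'I_n -> 'rV[R]_d) :
  (forall i v, v \notin supp fp i -> a i 0 v = 0) ->
  \sum_(i < n) Dproj fp i (n%:R^-1 *: \sum_(k < n) a k) = \sum_(i < n) a i.
Proof.
move=> a_supp; apply/matrixP => z v; rewrite (ord1 z) !summxE.
have [cnt0|cnt_gt0] := posnP (cnt fp v).
  rewrite big1 => [|i _]; last by rewrite mxE cnt0 andbF.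
  rewrite big1 // => i _; apply: a_supp; apply/negP => /cnt_gt0.
  by rewrite cnt0.
under eq_bigr do rewrite mxE cnt_gt0 andbT.
rewrite sum_in_supp mxE summxE /pv.
have n0 : n%:R != 0 :> R by rewrite pnatr_eq0 -lt0n.
have c0 : (cnt fp v)%:R != 0 :> R by rewrite pnatr_eq0 -lt0n.
by field; apply/andP.
Qed.

(* The indicator costs nothing because b vanishes off S_i. *)
Lemma cross_le_sqrtDelta i v (c a b : R) : 0 <= c <= 1 ->
  (v \notin supp fp i -> b = 0) ->
  2 * c * a * b <= Num.sqrt (Delta fp) * b ^+ 2
    + (Num.sqrt (Delta fp))^-1 * (if v \in supp fp i then a ^+ 2 else 0).
Proof.
move=> c01 b0; case: ifP => vS.
  by apply: amgm_weighted => //; rewrite sqrtr_gt0 (Delta_gt0 vS).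
by rewrite b0 ?vS // expr2 !mulr0 addr0.
Qed.

End Sparsity.

Lemma sqnorm_perturbed_step (R : realType) d (gamma mu : R) (h c g : 'rV[R]_d) :
  0 <= gamma * mu ->
  sqnorm (h - gamma *: c - gamma *: g)
    <= (1 - gamma * mu / 2) * sqnorm (h - gamma *: c) + gamma ^+ 2 * sqnorm g
       + gamma ^+ 3 * mu * sqnorm c + gamma ^+ 2 * (2 * dotv c g)
       + gamma * mu * sqnorm h - 2 * gamma * dotv h g.
Proof.
move=> gmu0; rewrite /sqnorm /dotv !mulr_sumr -!big_split -sumrB /=.
apply: ler_sum => v _; rewrite !mxE.
(* equivalent to (h - gamma c)^2 <= 2 h^2 + 2 (gamma c)^2 *)
have : 0 <= gamma * mu * (h 0 v + gamma * c 0 v) ^+ 2 by rewrite mulr_ge0 ?sqr_ge0.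
lra.
Qed.

Lemma masked_sum_sqr_recr (R : realType) d lo k (m : nat -> 'I_d -> R)
    (y : nat -> 'rV[R]_d) : (lo <= k)%N -> (forall u v, 0 <= m u v <= 1) ->
  \sum_(v < d) (\sum_(lo <= u < k.+1) m u v * y u 0 v) ^+ 2
    <= \sum_(v < d) (\sum_(lo <= u < k) m u v * y u 0 v) ^+ 2
       + \sum_(lo <= u < k) \sum_(v < d) 2 * (m u v * m k v) * y u 0 v * y k 0 v
       + sqnorm (y k).
Proof.
move=> lok m01; rewrite exchange_big /sqnorm -!big_split /=.
apply: ler_sum => v _; have /andP[mk0 mk1] := m01 k v.
rewrite big_nat_recr //=; set C := \sum_(lo <= u < k) _; set a := y k 0 v.
have -> : \sum_(lo <= u < k) 2 * (m u v * m k v) * y u 0 v * a = 2 * C * (m k v * a).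
  by rewrite /C mulr_sumr mulr_suml; apply: eq_bigr => u _; ring.
have : (m k v * a) ^+ 2 <= a ^+ 2 by rewrite exprMn ler_piMl ?sqr_ge0 // expr2 mulr_ile1.
lra.
Qed.

Section Process.
Variables (R : realType) (d n : nat) (fp : 'I_n -> 'rV[R]_d -> 'rV[R]_d).
Variables (gamma : R) (x0 : 'rV[R]_d) (alpha0 : 'I_n -> 'rV[R]_d).
Variables (xhat : nat -> spath n -> 'rV[R]_d) (W : nat -> 'I_d -> spath n -> nat -> bool).
Variables (src : nat -> 'I_n -> 'I_d -> spath n -> option nat) (tau : nat).
Hypothesis asaga : asaga_process fp gamma x0 alpha0 xhat W src tau.
Hypothesis alpha0_supp : forall i v, v \notin supp fp i -> alpha0 i 0 v = 0.

Local Notation alphahat := (alphahat fp alpha0 xhat src).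
Local Notation g := (gt fp alpha0 xhat src).
Local Notation x := (xvirt fp gamma x0 alpha0 xhat src).

Definition avg_grad (y : 'rV[R]_d) : 'rV[R]_d := n%:R^-1 *: \sum_(i < n) fp i y.

Definition gt_at (t : nat) (i : 'I_n) (w : spath n) : 'rV[R]_d :=
  fp i (xhat t w) - alphahat t i w + Dproj fp i (n%:R^-1 *: \sum_(k < n) alphahat t k w).

Definition missed (t : nat) (w : spath n) : 'rV[R]_d :=
  \row_v \sum_(t - tau <= u < t) (~~ W t v w u)%:R * g u w 0 v.

Lemma reads_prefix t w w' : prefix_eq t w w' ->
  xhat t w = xhat t w' /\ forall j, alphahat t j w = alphahat t j w'.
Proof.
have [xhatE [_ [_ [srcP [_ readsP]]]]] := asaga.
elim/ltn_ind: t w w' => t IH w w' ww'.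
have [WE srcE] := readsP _ _ _ ww'.
have IHu u : (u < t)%N -> xhat u w = xhat u w' /\ forall j, alphahat u j w = alphahat u j w'.
  by move=> ut; apply: IH => // m mu; apply: ww'; exact: ltn_trans mu ut.
have alphaE j : alphahat t j w = alphahat t j w'.
  apply/matrixP => i v; rewrite !mxE -srcE.
  case e: (src t j v w) => [u|] //.
  by have [ut _ _] := srcP _ _ _ _ _ e; have [-> _] := IHu u ut.
split=> //; apply/matrixP => i v; rewrite (ord1 i) !xhatE.
congr (_ - _ * _); apply: eq_big => [u|u _]; first by rewrite WE.
have [xE aE] := IHu u (ltn_ord u).
rewrite /gt (ww' u (ltn_ord u)) xE.
by under eq_bigr do rewrite aE; rewrite aE.
Qed.

Lemma gt_at_prefix t i w w' : prefix_eq t w w' -> gt_at t i w = gt_at t i w'.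
Proof.
move=> /reads_prefix[xE aE]; rewrite /gt_at xE aE.
by under eq_bigr do rewrite aE.
Qed.

Lemma gt_prefix t w w' : prefix_eq t.+1 w w' -> g t w = g t w'.
Proof.
move=> ww'; rewrite [LHS]/gt (ww' t (ltnSn t)).
by apply: (gt_at_prefix (w' t)) => u /ltnW; exact: ww'.
Qed.

Lemma alphahat_notin_supp t j w v : v \notin supp fp j -> alphahat t j w 0 v = 0.
Proof.
have [_ [_ [_ [srcP _]]]] := asaga.
move=> vS; rewrite mxE; case e: (src t j v w) => [u|]; last exact: alpha0_supp.
by have [_ _ vS'] := srcP _ _ _ _ _ e; rewrite vS' in vS.
Qed.

Lemma gt_notin_supp t w v : v \notin supp fp (w t) -> g t w 0 v = 0.
Proof.
move=> vS; move: (fp_notin_supp (xhat t w) vS) (alphahat_notin_supp t w vS).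
move: (Dproj_notin_supp (n%:R^-1 *: \sum_(k < n) alphahat t k w) vS).
by rewrite /gt !mxE => -> -> ->; rewrite subr0 addr0.
Qed.

Lemma xvirtS t w : x t.+1 w = x t w - gamma *: g t w.
Proof. by rewrite /xvirt big_ord_recr /= scalerDr opprD addrA. Qed.

(* Writes older than tau are complete, or they do not touch coordinate v. *)
Lemma xvirt_missed t w : x t w = xhat t w - gamma *: missed t w.
Proof.
have [xhatE [_ [overlap _]]] := asaga.
apply/matrixP => i v; rewrite (ord1 i).
have split_writes : \sum_(u < t) g u w 0 v = \sum_(u < t | W t v w u) g u w 0 v
    + \sum_(u < t) (~~ W t v w u)%:R * g u w 0 v.
  rewrite [X in _ = X + _]big_mkcond -big_split /=; apply: eq_bigr => u _.
  by case: W; rewrite ?mul0r ?mul1r ?addr0 ?add0r.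
have recent : \sum_(u < t) (~~ W t v w u)%:R * g u w 0 v
    = \sum_(t - tau <= u < t) (~~ W t v w u)%:R * g u w 0 v.
  rewrite -(big_mkord xpredT (fun u => (~~ W t v w u)%:R * g u w 0 v)).
  rewrite (big_cat_nat (n := t - tau)) ?leq_subr //= big_nat_cond big1 ?add0r //.
  move=> u /andP[/andP[_ ut] _]; have old : (u + tau < t)%N by rewrite addnC -ltn_subRL.
  have [vS|vS] := boolP (v \in supp fp (w u)); first by rewrite (overlap _ _ _ _ old vS) mul0r.
  by rewrite (gt_notin_supp vS) mulr0.
rewrite !mxE xhatE summxE split_writes recent; ring.
Qed.

Variable (Hn : (0 < n)%N).
Local Notation E := (Exp Hn).
Local Notation sd := (Num.sqrt (Delta fp)).

Lemma Exp_dotv_gt N t (h : spath n -> 'rV[R]_d) : (t < N)%N ->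
  (forall w w', prefix_eq t w w' -> h w = h w') ->
  E N (fun w => dotv (h w) (g t w)) = E N (fun w => dotv (h w) (avg_grad (xhat t w))).
Proof.
move=> tN h_pre.
rewrite (@Exp_fresh_sample _ _ _ _ _ (fun w i => dotv (h w) (gt_at t i w))) //; last first.
  by move=> w w' ww' i; rewrite (h_pre _ _ ww') (gt_at_prefix i ww').
apply: eq_Exp => w; rewrite dotvC /avg_grad dotvZl; congr (_ * _).
have alpha_supp i v : v \notin supp fp i -> alphahat t i w 0 v = 0.
  exact: alphahat_notin_supp.
under eq_bigr do rewrite dotvC.
rewrite -dotv_suml; congr dotv.
by rewrite !big_split /= sumrN (sum_Dproj_avg Hn alpha_supp) subrK.
Qed.

Lemma Exp_cross_pair N u k (c : 'I_d -> spath n -> R) : (u < k)%N -> (k < N)%N ->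
  (forall v w, 0 <= c v w <= 1) ->
  E N (fun w => \sum_(v < d) 2 * c v w * g u w 0 v * g k w 0 v)
    <= sd * E N (fun w => sqnorm (g k w)) + sd * E N (fun w => sqnorm (g u w)).
Proof.
move=> uk kN c01.
pose on_supp w i := \sum_(v < d) (if v \in supp fp i then g u w 0 v ^+ 2 else 0).
apply: (@le_trans _ _ (E N (fun w => sd * sqnorm (g k w) + sd^-1 * on_supp w (w k)))).
  apply: le_Exp => w; rewrite /sqnorm /on_supp !mulr_sumr -big_split.
  apply: ler_sum => v _; apply: cross_le_sqrtDelta => //.
  exact: gt_notin_supp.
rewrite ExpD !ExpZ lerD2l (Exp_fresh_sample Hn kN); last first.
  move=> w w' ww' i; rewrite /on_supp; suff -> : g u w = g u w' by [].
  by apply: gt_prefix => m mu; apply: ww'; exact: leq_trans mu uk.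
apply: (@le_trans _ _ (sd^-1 * E N (fun w => Delta fp * sqnorm (g u w)))).
  by rewrite ler_wpM2l ?invr_ge0 ?sqrtr_ge0 //; apply: le_Exp => w; exact: avg_supp_sqnorm_le.
have sdK : sd^-1 * Delta fp = sd.
  have [->|sd0] := eqVneq sd 0; first by rewrite invr0 mul0r.
  by apply: (mulfI sd0); rewrite mulrA mulfV // mul1r -expr2 sqr_sqrtr ?Delta_ge0.
by rewrite ExpZ mulrA sdK.
Qed.

Lemma Exp_cross_sum N lo k (c : nat -> 'I_d -> spath n -> R) : (k < N)%N ->
  (forall u v w, 0 <= c u v w <= 1) ->
  E N (fun w => \sum_(lo <= u < k) \sum_(v < d) 2 * c u v w * g u w 0 v * g k w 0 v)
    <= sd * (k - lo)%:R * E N (fun w => sqnorm (g k w))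
       + sd * \sum_(lo <= u < k) E N (fun w => sqnorm (g u w)).
Proof.
move=> kN c01; rewrite Exp_sum.
apply: (@le_trans _ _ (\sum_(lo <= u < k)
  (sd * E N (fun w => sqnorm (g k w)) + sd * E N (fun w => sqnorm (g u w))))).
  by apply: ler_sum_nat => u /andP[_ uk]; exact: Exp_cross_pair.
by rewrite big_split /= sumr_const_nat -mulr_sumr mulrAC mulr_natr.
Qed.

Lemma Exp_masked_sqnorm N lo k (m : nat -> 'I_d -> spath n -> R) : (lo <= k <= N)%N ->
  (forall u v w, 0 <= m u v w <= 1) ->
  E N (fun w => \sum_(v < d) (\sum_(lo <= u < k) m u v w * g u w 0 v) ^+ 2)
    <= (1 + sd * (k - lo)%:R) * \sum_(lo <= u < k) E N (fun w => sqnorm (g u w)).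
Proof.
move=> /andP[lok kN] m01; rewrite -(subnKC lok) addKn in kN *.
elim: (k - lo)%N kN => [|j IH] jN.
  rewrite addn0 big_geq // mulr0 (@eq_Exp _ _ Hn N _ (fun=> 0)) ?Exp_cst // => w.
  by rewrite big1 // => v _; rewrite big_geq // expr2 mulr0.
set k' := (lo + j)%N; have k'N : (k' < N)%N by rewrite /k' addnS in jN.
set G := E N (fun w => sqnorm (g k' w)).
set S := \sum_(lo <= u < k') E N (fun w => sqnorm (g u w)).
have G0 : 0 <= G by apply: Exp_ge0 => w; exact: sqnorm_ge0.
have sd0 : 0 <= sd := sqrtr_ge0 _.
have m2_01 u v w : 0 <= m u v w * m k' v w <= 1.
  have /andP[mu0 mu1] := m01 u v w; have /andP[mk0 mk1] := m01 k' v w.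
  by rewrite mulr_ge0 ?mulr_ile1.
have cross := Exp_cross_sum lo k'N m2_01; rewrite addKn -/G -/S in cross.
move/(_ (ltnW k'N)): IH; rewrite -/k' -/S => IH.
rewrite addnS big_nat_recr ?leq_addr //= -/k' -/S.
apply: le_trans (le_Exp Hn N (fun w =>
  masked_sum_sqr_recr (fun u => g u w) (leq_addr j lo) (fun u v => m01 u v w))) _.
rewrite !ExpD -/G.
have -> : (1 + sd * (j.+1)%:R) * (S + G)
    = (1 + sd * j%:R) * S + (sd * j%:R * G + sd * S) + G + sd * G.
  by rewrite -addn1 natrD; ring.
have : 0 <= sd * G by rewrite mulr_ge0.
lra.
Qed.

Lemma window_le_tau t : (t - (t - tau))%:R <= tau%:R :> R.
Proof. by rewrite ler_nat -minnE geq_minr. Qed.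

Lemma Exp_sqnorm_missed_le N t : (t <= N)%N ->
  E N (fun w => sqnorm (missed t w))
    <= (1 + sd * tau%:R) * \sum_(t - tau <= u < t) E N (fun w => sqnorm (g u w)).
Proof.
move=> tN.
have -> : E N (fun w => sqnorm (missed t w)) = E N (fun w => \sum_(v < d)
    (\sum_(t - tau <= u < t) (~~ W t v w u)%:R * g u w 0 v) ^+ 2).
  by apply: eq_Exp => w; apply: eq_bigr => v _; rewrite mxE.
apply: le_trans (Exp_masked_sqnorm _ _) _; first by rewrite leq_subr.
  by move=> u v w; rewrite ler0n lern1 leq_b1.
apply: ler_wpM2r; first by apply: sumr_ge0 => u _; apply: Exp_ge0 => w; exact: sqnorm_ge0.
by rewrite lerD2l; apply: ler_wpM2l; [exact: sqrtr_ge0 | exact: window_le_tau].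
Qed.

Lemma Exp_dotv_missed_le N t : (t < N)%N ->
  E N (fun w => 2 * dotv (missed t w) (g t w))
    <= sd * tau%:R * E N (fun w => sqnorm (g t w))
       + sd * \sum_(t - tau <= u < t) E N (fun w => sqnorm (g u w)).
Proof.
move=> tN.
have -> : E N (fun w => 2 * dotv (missed t w) (g t w)) = E N (fun w =>
    \sum_(t - tau <= u < t) \sum_(v < d) 2 * (~~ W t v w u)%:R * g u w 0 v * g t w 0 v).
  apply: eq_Exp => w; rewrite /dotv exchange_big mulr_sumr; apply: eq_bigr => v _.
  by rewrite mxE mulr_suml mulr_sumr; apply: eq_bigr => u _; ring.
apply: le_trans (Exp_cross_sum _ tN _) _.
  by move=> u v w; rewrite ler0n lern1 leq_b1.
rewrite lerD2r; apply: ler_wpM2r; first by apply: Exp_ge0 => w; exact: sqnorm_ge0.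
by apply: ler_wpM2l; [exact: sqrtr_ge0 | exact: window_le_tau].
Qed.

Lemma Exp_sqnorm_xvirtS_le N t (G : 'rV[R]_d -> R) (mu : R) (xs : 'rV[R]_d) :
  (t < N)%N -> 0 <= gamma -> 0 <= mu -> strongly_convex mu G ->
  (forall y h, is_derive y h G (dotv (avg_grad y) h)) ->
  E N (fun w => sqnorm (x t.+1 w - xs))
    <= (1 - gamma * mu / 2) * E N (fun w => sqnorm (x t w - xs))
       + gamma ^+ 2 * E N (fun w => sqnorm (g t w))
       + gamma ^+ 3 * mu * E N (fun w => sqnorm (missed t w))
       + gamma ^+ 2 * E N (fun w => 2 * dotv (missed t w) (g t w))
       - 2 * gamma * (E N (fun w => G (xhat t w)) - G xs).
Proof.
move=> tN gamma0 mu0 Gsc Gder; pose h w := xhat t w - xs.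
pose bias w := dotv (h w) (g t w) - dotv (h w) (avg_grad (xhat t w)).
have step w : sqnorm (x t.+1 w - xs)
    <= (1 - gamma * mu / 2) * sqnorm (x t w - xs) + gamma ^+ 2 * sqnorm (g t w)
       + gamma ^+ 3 * mu * sqnorm (missed t w)
       + gamma ^+ 2 * (2 * dotv (missed t w) (g t w))
       - 2 * gamma * (G (xhat t w) - G xs) - 2 * gamma * bias w.
  have xt : x t w - xs = h w - gamma *: missed t w.
    by rewrite xvirt_missed /h addrAC.
  have xS : x t.+1 w - xs = h w - gamma *: missed t w - gamma *: g t w.
    by rewrite xvirtS -xt addrAC.
  have := sqnorm_perturbed_step (h w) (missed t w) (g t w) (mulr_ge0 gamma0 mu0).
  have := strongly_convex_first_order Gsc (Gder (xhat t w) (xs - xhat t w)).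
  move/(ler_wpM2l (mulr_ge0 (ler0n R 2) gamma0)).
  by rewrite xS xt /bias -/(h w); lra.
have bias0 : E N bias = 0.
  by rewrite ExpB Exp_dotv_gt ?subrr // => w w' /reads_prefix[xE _]; rewrite /h xE.
apply: le_trans (le_Exp Hn N step) _.
by rewrite ExpB ExpZ bias0 mulr0 subr0 ExpB ExpZ ExpB Exp_cst !ExpD !ExpZ.
Qed.

End Process.

Unset Implicit Arguments.

Theorem lemma1 (R : realType) (d n : nat) (Hn : (0 < n)%N)
  (f : 'I_n -> 'rV[R]_d -> R) (fp : 'I_n -> 'rV[R]_d -> 'rV[R]_d)
  (L mu gamma : R) (tau : nat) (xstar x0 : 'rV[R]_d) (alpha0 : 'I_n -> 'rV[R]_d)
  (xhat : nat -> spath n -> 'rV[R]_d) (W : nat -> 'I_d -> spath n -> nat -> bool)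
  (src : nat -> 'I_n -> 'I_d -> spath n -> option nat) :
  let F := fun x => n%:R^-1 * \sum_(i < n) f i x in
  (forall i, convex_fun (f i)) ->
  (forall i, is_gradient (f i) (fp i)) ->
  (forall i, lipschitz_grad L (fp i)) ->
  0 < mu -> strongly_convex mu F ->
  (forall x, F xstar <= F x) ->
  (forall i v, v \notin supp fp i -> alpha0 i 0 v = 0) ->
  0 < gamma ->
  asaga_process fp gamma x0 alpha0 xhat W src tau ->
  let C1 := 1 + Num.sqrt (Delta fp) * tau%:R in
  let C2 := Num.sqrt (Delta fp) + gamma * mu * C1 in
  let E := Exp (R:=R) Hn in
  let g := gt fp alpha0 xhat src in
  let x := xvirt fp gamma x0 alpha0 xhat src in
  forall t : nat,
    let a := fun s => E t.+1 (fun w => sqnorm (x s w - xstar)) in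
    let e := E t.+1 (fun w => F (xhat t w)) - F xstar in
    a t.+1 <= (1 - gamma * mu / 2) * a t
              + gamma ^+ 2 * C1 * E t.+1 (fun w => sqnorm (g t w))
              + gamma ^+ 2 * C2 * \sum_(t - tau <= u < t) E t.+1 (fun w => sqnorm (g u w))
              - 2 * gamma * e.
Proof.
move=> F _ fgrad _ mu0 Fsc _ alpha0_supp gamma0 asaga C1 C2 E g x t /=.
have Fder y h := is_derive_avg y h fgrad.
have step := Exp_sqnorm_xvirtS_le asaga alpha0_supp Hn xstar (ltnSn t) (ltW gamma0) (ltW mu0) Fsc Fder.
have sq := Exp_sqnorm_missed_le asaga alpha0_supp Hn (leqnSn t).
have cross := Exp_dotv_missed_le asaga alpha0_supp Hn (ltnSn t).
have := ler_wpM2l (mulr_ge0 (exprn_ge0 3 (ltW gamma0)) (ltW mu0)) sq.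
have := ler_wpM2l (exprn_ge0 2 (ltW gamma0)) cross.
move: step; rewrite /C2 /C1 /E /g /x.
lra.
Qed.
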